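(* In the setting below, let $p,q\in X$ with $S_p\subsetneq S_q$ and $|S_p|\ge 2$, and write $p=\sum_{e_i\in S_p}\lambda_ie_i$, $q=\sum_{e_i\in S_q}\theta_ie_i$ (normalized by the convention). Then $\lambda_i=\theta_i$ for every $e_i\in S_p$.
   Context: Setting: $E=\{e_0,\dots,e_n\}\subset\mathbb R^n$ is the vertex set of an $n$-simplex with $e_0+\cdots+e_n=0$, and $X\subset\mathbb R^n\setminus\{0\}$ is a finite set with $E\subseteq X$, no element of $X$ a positive multiple of another, such that every $n+1$ points of $X$ are in good position. (A finite set $A$ is in conical position if $0\notin\operatorname{conv}A$ and no point of $A$ lies in the positive hull—set of nonnegative linear combinations—of the other points; it is in good position otherwise.) For $p\in X$, the support $S_p$ is the minimal subset of $E$ whose positive hull contains $p$; then $p=\sum_{e_i\in S_p}\lambda_ie_i$ uniquely with all $\lambda_i>0$. Convention: each $p\in X$ is replaced by the positive multiple for which $\min_{e_i\in S_p}\lambda_i=1$. *)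

From HB Require Import structures.
From mathcomp Require Import all_boot all_order all_algebra.
From mathcomp Require Import reals.
Set Implicit Arguments. Unset Strict Implicit. Unset Printing Implicit Defensive.
Import Order.TTheory GRing.Theory Num.Theory.
Local Open Scope ring_scope.

Section Defs.
Variables (R : realType) (n : nat).
Notation V := ('rV[R]_n).

Definition in_conv (s : seq V) (x : V) : Prop :=
  exists c : 'I_(size s) -> R,
    (forall i, 0 <= c i) /\ \sum_i c i = 1 /\ \sum_i c i *: s`_i = x.

Definition in_pos_hull (s : seq V) (x : V) : Prop :=
  exists c : 'I_(size s) -> R,
    (forall i, 0 <= c i) /\ \sum_i c i *: s`_i = x.

(* A finite set of points, given as a duplicate-free sequence A, is in
   conical position iff 0 is not in conv A and no point of A lies in the
   positive hull of the other points. *)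
Definition conical_position (A : seq V) : Prop :=
  ~ in_conv A 0 /\ forall a, a \in A -> ~ in_pos_hull (rem a A) a.

Definition good_position (A : seq V) : Prop := ~ conical_position A.

Definition affinely_independent (e : 'I_n.+1 -> V) : Prop :=
  forall c : 'I_n.+1 -> R,
    \sum_i c i = 0 -> \sum_i c i *: e i = 0 -> forall i, c i = 0.

Definition in_pos_hull_idx (e : 'I_n.+1 -> V) (S : {set 'I_n.+1}) (p : V) : Prop :=
  exists c : 'I_n.+1 -> R, (forall i, 0 <= c i) /\ p = \sum_(i in S) c i *: e i.

Definition is_support (e : 'I_n.+1 -> V) (p : V) (S : {set 'I_n.+1}) : Prop :=
  in_pos_hull_idx e S p /\
  forall S' : {set 'I_n.+1}, S' \proper S -> ~ in_pos_hull_idx e S' p.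

Definition pos_repr (e : 'I_n.+1 -> V) (p : V) (S : {set 'I_n.+1}) (c : 'I_n.+1 -> R) : Prop :=
  (forall i, i \in S -> 0 < c i) /\ p = \sum_(i in S) c i *: e i.

Definition min_coef_one (S : {set 'I_n.+1}) (c : 'I_n.+1 -> R) : Prop :=
  (exists2 i, i \in S & c i = 1) /\ (forall i, i \in S -> 1 <= c i).

End Defs.

From HB Require Import structures.
From mathcomp Require Import all_boot all_order all_algebra.
From mathcomp Require Import reals.
From mathcomp Require Import ring lra.
Set Implicit Arguments. Unset Strict Implicit.
Import Order.TTheory GRing.Theory Num.Theory.
Local Open Scope ring_scope.

(* Every argument produces n+1 distinct points of X and contradicts the
   good-position hypothesis by showing they are in conical position.  For
   this we use a criterion (conical_of_dependencies): points are in conical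
   position as soon as every linear dependency among them is trivial or has
   two negative coefficients.  Dependencies among a few points of X and some
   simplex vertices are computed in vertex coordinates, which are unique up
   to an additive constant because the vertices are affinely independent and
   sum to 0 (simplex_dependency_const, dependency_coord_const); the sign
   bookkeeping for two points is isolated in two_point_signs.
   Two configurations are used: {x} with the vertices except e_m shows that
   at most one coefficient of x exceeds any other (coef_above_unique);
   {p, q} with the vertices except e_a, e_b shows that theta/lambda is
   constant on S_p (coef_ratio_eq), where b is a vertex missed by S_q
   (support_misses_vertex).  The normalization then forces the ratio to 1. *)

Section ConicalCriterion.
Variables (R : realType) (n : nat).
Notation V := ('rV[R]_n).

(* Coefficients indexed by the positions of a sequence, read as a function on
   its points (0 outside); for a duplicate-free sequence this is faithful. *)
Definition point_coef (s : seq V) (c : 'I_(size s) -> R) (v : V) : R :=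
  oapp c 0 (insub (index v s)).

Lemma point_coef_ge0 (s : seq V) (c : 'I_(size s) -> R) (v : V) :
  (forall i, 0 <= c i) -> 0 <= point_coef c v.
Proof. by move=> c_ge0; rewrite /point_coef; case: insub. Qed.

Lemma sum_point_coef (W : nmodType) (s : seq V) (c : 'I_(size s) -> R)
    (F : R -> V -> W) :
  uniq s -> \sum_i F (c i) s`_i = \sum_(v <- s) F (point_coef c v) v.
Proof.
move=> us; rewrite (big_index_uniq _ _ _ us) /= big_seq [RHS]big_seq.
apply: eq_bigr => v vs; rewrite /point_coef.
case: insubP => [i _ iE|] /=; last by rewrite index_mem vs.
by rewrite iE nth_index.
Qed.

Definition two_negative (A : seq V) (g : V -> R) : Prop :=
  exists v1 v2, [/\ v1 \in A, v2 \in A, v1 != v2, g v1 < 0 & g v2 < 0].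

(* Both ways of
   failing conical position (0 in conv A, a point in the positive hull of the
   others) give a nontrivial dependency with at most one negative coefficient. *)
Lemma conical_of_dependencies (A : seq V) : uniq A ->
  (forall g : V -> R, \sum_(v <- A) g v *: v = 0 ->
     {in A, forall v, g v = 0} \/ two_negative A g) ->
  conical_position A.
Proof.
move=> uA dep; split.
  case=> c [c_ge0 [c_sum1 c_dep]].
  rewrite (sum_point_coef c (fun a v => a *: v) uA) in c_dep.
  rewrite (sum_point_coef c (fun a _ => a) uA) in c_sum1.
  case: (dep _ c_dep) => [c0|[v1 [_ [_ _ _ c1_lt0 _]]]].
    have sum0 : \sum_(v <- A) point_coef c v = 0 by rewrite big_seq big1 // => v /c0.
    by move: c_sum1; rewrite sum0 => /eqP; rewrite eq_sym oner_eq0.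
  by move: (point_coef_ge0 v1 c_ge0); rewrite leNgt c1_lt0.
move=> a aA [c [c_ge0 c_comb]].
have ur : uniq (rem a A) by exact: rem_uniq.
rewrite (sum_point_coef c (fun a v => a *: v) ur) in c_comb.
pose g v := if v == a then -1 else point_coef c v.
have g_ge0 v : v != a -> 0 <= g v.
  by move=> /negbTE va; rewrite /g va; apply: point_coef_ge0.
have g_dep : \sum_(v <- A) g v *: v = 0.
  rewrite (perm_big _ (perm_to_rem aA)) big_cons /g eqxx scaleN1r.
  rewrite -[RHS](addNr a); congr (_ + _).
  rewrite -[RHS]c_comb big_seq [RHS]big_seq; apply: eq_bigr => v vr.
  by case: eqP vr => // ->; rewrite (mem_rem_uniqF _ uA).
case: (dep g g_dep) => [g0|[v1 [v2 [_ _ v12 g1 g2]]]].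
  by move: (g0 a aA); rewrite /g eqxx => /eqP; rewrite oppr_eq0 oner_eq0.
have [v1a|v1a] := eqVneq v1 a; last by move: (g_ge0 _ v1a); rewrite leNgt g1.
have v2a : v2 != a by rewrite -v1a eq_sym.
by move: (g_ge0 _ v2a); rewrite leNgt g2.
Qed.

End ConicalCriterion.

Section Simplex.
Variables (R : realType) (n : nat).
Notation V := ('rV[R]_n).
Variable e : 'I_n.+1 -> V.
Hypothesis he_aff : affinely_independent e.
Hypothesis he_sum : \sum_i e i = 0.

Lemma simplex_dependency_const (c : 'I_n.+1 -> R) :
  \sum_i c i *: e i = 0 -> forall i j, c i = c j.
Proof.
move=> c_dep.
pose m := (\sum_i c i) / n.+1%:R.
suff c_m i : c i = m by move=> i j; rewrite !c_m.
apply/eqP; rewrite -subr_eq0; apply/eqP; apply: (he_aff (c := fun i => c i - m)).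
  rewrite sumrB sumr_const card_ord -mulr_natr /m divfK ?subrr //.
  by rewrite pnatr_eq0.
under eq_bigr do rewrite scalerBl.
by rewrite sumrB c_dep -scaler_sumr he_sum scaler0 subrr.
Qed.

Lemma simplex_coords_diff_const (c d : 'I_n.+1 -> R) :
  \sum_i c i *: e i = \sum_i d i *: e i -> forall i j, c i - d i = c j - d j.
Proof.
move=> cd; apply: simplex_dependency_const.
under eq_bigr do rewrite scalerBl.
by rewrite sumrB cd subrr.
Qed.

Lemma sum_delta_vertex (i : 'I_n.+1) : \sum_k (k == i)%:R *: e k = e i.
Proof.
rewrite (eq_bigr (fun k => if k == i then e k else 0)).
  by rewrite -big_mkcond big_pred1_eq.
by move=> k _; case: eqP => _; rewrite ?scale1r ?scale0r.
Qed.

Lemma vertex_inj : injective e.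
Proof.
move=> i j eij; apply/eqP/negPn/negP => ij.
have := simplex_coords_diff_const (c := fun k => (k == i)%:R)
  (d := fun k => (k == j)%:R).
rewrite !sum_delta_vertex eij => /(_ erefl i j).
rewrite eqxx (negbTE ij) eq_sym (negbTE ij) eqxx /=; lra.
Qed.

Definition coef_on (S : {set 'I_n.+1}) (c : 'I_n.+1 -> R) (i : 'I_n.+1) : R :=
  if i \in S then c i else 0.

Lemma coef_on_in (S : {set 'I_n.+1}) (c : 'I_n.+1 -> R) (i : 'I_n.+1) :
  i \in S -> coef_on S c i = c i.
Proof. by rewrite /coef_on => ->. Qed.

Lemma coef_on_out (S : {set 'I_n.+1}) (c : 'I_n.+1 -> R) (i : 'I_n.+1) :
  i \notin S -> coef_on S c i = 0.
Proof. by rewrite /coef_on => /negbTE ->. Qed.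

Lemma pos_repr_coords (x : V) (S : {set 'I_n.+1}) (c : 'I_n.+1 -> R) :
  pos_repr e x S c -> x = \sum_i coef_on S c i *: e i.
Proof.
move=> [_ ->]; rewrite big_mkcond; apply: eq_bigr => i _; rewrite /coef_on.
by case: (i \in S); rewrite ?scale0r.
Qed.

Lemma pos_repr_neq_vertex (x : V) (S : {set 'I_n.+1}) (c : 'I_n.+1 -> R)
    (a b i : 'I_n.+1) :
  pos_repr e x S c -> a \in S -> b \notin S -> i != a -> x != e i.
Proof.
move=> xc aS bS ia; apply/eqP => xi.
have := simplex_coords_diff_const (c := coef_on S c) (d := fun j => (j == i)%:R).
rewrite sum_delta_vertex -(pos_repr_coords xc) xi => /(_ erefl a b).
rewrite (coef_on_in c aS) (coef_on_out c bS) eq_sym (negbTE ia).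
by have := xc.1 a aS; case: (b == i) => /=; lra.
Qed.

Lemma pos_repr_neq (p q : V) (Sp Sq : {set 'I_n.+1}) (l t : 'I_n.+1 -> R)
    (b m : 'I_n.+1) :
  pos_repr e p Sp l -> pos_repr e q Sq t -> b \notin Sp -> b \notin Sq ->
  m \in Sq -> m \notin Sp -> q != p.
Proof.
move=> pl qt bSp bSq mSq mSp; apply/eqP => qp.
have := simplex_coords_diff_const (c := coef_on Sp l) (d := coef_on Sq t).
rewrite -(pos_repr_coords pl) -(pos_repr_coords qt) qp => /(_ erefl m b).
rewrite (coef_on_out l mSp) (coef_on_in t mSq) (coef_on_out l bSp) (coef_on_out t bSq).
by have := qt.1 m mSq; lra.
Qed.

Definition dependency_coord (xs : seq V) (c : V -> 'I_n.+1 -> R)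
    (P : {set 'I_n.+1}) (g : V -> R) (i : 'I_n.+1) : R :=
  \sum_(x <- xs) g x * c x i + (if i \in P then g (e i) else 0).

Lemma dependency_coord_const (xs : seq V) (c : V -> 'I_n.+1 -> R)
    (P : {set 'I_n.+1}) (g : V -> R) :
  (forall x, x \in xs -> x = \sum_i c x i *: e i) ->
  \sum_(v <- xs ++ map e (enum P)) g v *: v = 0 ->
  forall i j, dependency_coord xs c P g i = dependency_coord xs c P g j.
Proof.
move=> xs_coord g_dep; apply: simplex_dependency_const; rewrite -[RHS]g_dep.
rewrite big_cat big_map big_enum /= [X in _ = _ + X]big_mkcond /=.
have -> : \sum_(x <- xs) g x *: x = \sum_i (\sum_(x <- xs) g x * c x i) *: e i.
  under [RHS]eq_bigr do rewrite scaler_suml.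
  rewrite exchange_big big_seq [RHS]big_seq; apply: eq_bigr => x xxs.
  under [RHS]eq_bigr do rewrite -scalerA.
  by rewrite -scaler_sumr -xs_coord.
rewrite -big_split; apply: eq_bigr => i _; rewrite /dependency_coord scalerDl.
by case: (i \in P); rewrite ?scale0r.
Qed.

(* If the coefficients of x in its support S have minimum 1, then S misses a
   vertex: otherwise subtracting sum_i e_i = 0 would express x on a smaller
   set of vertices. *)
Lemma support_misses_vertex (x : V) (S : {set 'I_n.+1}) (c : 'I_n.+1 -> R) :
  is_support e x S -> pos_repr e x S c -> min_coef_one S c ->
  exists b, b \notin S.
Proof.
move=> [_ S_min] [_ xE] [[k kS ck] c_ge1].
have [b bS|S_full] := pickP (fun b => b \notin S); first by exists b.
have inS i : i \in S by have := S_full i; move/negbFE.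
exfalso; apply: (S_min (S :\ k) (properD1 kS)).
exists (fun i => c i - 1); split=> [i|]; first by rewrite subr_ge0 c_ge1.
have e_sumS : \sum_(i in S) e i = 0.
  by rewrite -[RHS]he_sum; apply: eq_bigl => i; rewrite inS.
have -> : \sum_(i in S :\ k) (c i - 1) *: e i = \sum_(i in S) (c i - 1) *: e i.
  by rewrite [RHS](big_setD1 k kS) /= ck subrr scale0r add0r.
under eq_bigr do rewrite scalerBl scale1r.
by rewrite sumrB e_sumS subr0 -xE.
Qed.

End Simplex.

Lemma two_point_signs (F : realFieldType) (gp gq la ta lj tj : F) :
  0 < la -> 0 < ta -> tj * la < ta * lj -> gp * la + gq * ta = 0 ->
  [\/ gp = 0 /\ gq = 0, gq < 0 /\ 0 < gp * lj + gq * tj | gp < 0 /\ 0 < gq].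
Proof.
move=> la_gt0 ta_gt0 ratio_lt g_a.
have [gp_gt0|gp_lt0|gp0] := ltrgt0P gp.
- have gq_ta : gq * ta = - (gp * la) by lra.
  apply: Or32; split; first by rewrite -(pmulr_rlt0 _ ta_gt0) mulrC gq_ta oppr_lt0 mulr_gt0.
  have -> : gp * lj + gq * tj = ta^-1 * (gp * (ta * lj - tj * la)).
    apply: (mulfI (lt0r_neq0 ta_gt0)); rewrite mulVKf ?lt0r_neq0 //.
    by transitivity (gp * lj * ta + gq * ta * tj); [ring | rewrite gq_ta; ring].
  by rewrite mulr_gt0 ?invr_gt0 // mulr_gt0 // subr_gt0.
- by apply: Or33; split => //; nra.
- by apply: Or31; split => //; nra.
Qed.

Section GoodPosition.
Variables (R : realType) (n : nat).
Notation V := ('rV[R]_n).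
Variables (e : 'I_n.+1 -> V) (X : seq V).
Hypothesis he_aff : affinely_independent e.
Hypothesis he_sum : \sum_i e i = 0.
Hypothesis hEX : forall i, e i \in X.
Hypothesis hgood : forall A : seq V, uniq A -> size A = n.+1 ->
  {subset A <= X} -> good_position A.

Lemma good_position_dependency (xs : seq V) (c : V -> 'I_n.+1 -> R)
    (P : {set 'I_n.+1}) :
  {subset xs <= X} -> uniq xs -> (forall x i, x \in xs -> i \in P -> x != e i) ->
  (size xs + #|P| = n.+1)%N -> (forall x, x \in xs -> x = \sum_i c x i *: e i) ->
  ~ (forall g : V -> R,
       (forall i j, dependency_coord e xs c P g i = dependency_coord e xs c P g j) ->
       {in xs ++ map e (enum P), forall v, g v = 0} \/
       two_negative (xs ++ map e (enum P)) g).
Proof.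
move=> xsX uxs xs_vert sizeA xs_coord dep.
have uA : uniq (xs ++ map e (enum P)).
  rewrite cat_uniq uxs map_inj_uniq ?enum_uniq ?andbT; last exact: vertex_inj he_aff he_sum.
  apply/hasPn => _ /mapP[i iP ->]; apply/negP => /(xs_vert _ i).
  by rewrite -mem_enum iP eqxx => /(_ isT).
apply: (hgood uA); first by rewrite size_cat size_map -cardE.
  by move=> v; rewrite mem_cat => /orP[/xsX //|/mapP[i _ ->]].
apply: conical_of_dependencies => // g g_dep.
by apply: dep; exact: (dependency_coord_const he_aff he_sum xs_coord g_dep).
Qed.

(* If the support S of x in X misses a vertex, then for any m in S at most one
   coefficient of x exceeds that of m: otherwise x and the vertices other than
   e_m would be n+1 points in conical position. *)
Lemma coef_above_unique (x : V) (S : {set 'I_n.+1}) (k : 'I_n.+1 -> R)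
    (b m j1 j2 : 'I_n.+1) :
  x \in X -> pos_repr e x S k -> b \notin S -> m \in S -> j1 \in S -> j2 \in S ->
  k m < k j1 -> k m < k j2 -> j1 = j2.
Proof.
move=> xX xk bS mS j1S j2S km1 km2.
have k_gt0 := xk.1; set k' := coef_on S k.
have k'b : k' b = 0 by exact: coef_on_out.
have k'E i : i \in S -> k' i = k i by exact: coef_on_in.
have bm : b != m by apply: contraNneq bS => ->.
have j1m : j1 != m by apply: contraTneq km1 => ->; rewrite ltxx.
have j2m : j2 != m by apply: contraTneq km2 => ->; rewrite ltxx.
have x_vert i : i != m -> x != e i := pos_repr_neq_vertex he_aff he_sum xk mS bS.
apply/eqP; apply: contraT => j12; exfalso.
apply: (good_position_dependency (xs := [:: x]) (c := fun _ => k') (P := [set~ m])).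
- by move=> v; rewrite inE => /eqP ->.
- by [].
- by move=> _ i /[!inE] /eqP -> /x_vert.
- by rewrite cardsC1 card_ord.
- by move=> _ /[!inE] /eqP ->; apply: pos_repr_coords.
move=> g g_coord.
have g_vert i : i != m -> g (e i) = g x * (k m - k' i).
  move=> im; have := g_coord i m.
  rewrite /dependency_coord !big_cons !big_nil !in_setC1 im eqxx /= !addr0 (k'E m mS).
  by move=> h; rewrite mulrBr -h; ring.
have inA i : i != m -> e i \in [:: x] ++ map e (enum [set~ m]).
  by move=> im; rewrite mem_cat map_f ?orbT // mem_enum in_setC1.
have [gx_gt0|gx_lt0|gx0] := ltrgt0P (g x).
- right; exists (e j1), (e j2); split; rewrite ?inA //.
  + by apply: contra j12 => /eqP /(vertex_inj he_aff he_sum) ->.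
  + by rewrite g_vert // k'E // pmulr_rlt0 // subr_lt0.
  + by rewrite g_vert // k'E // pmulr_rlt0 // subr_lt0.
- right; exists x, (e b); split; rewrite ?inA ?mem_head ?x_vert //.
  by rewrite g_vert // k'b subr0 nmulr_rlt0 ?k_gt0.
- left => v; rewrite mem_cat => /orP[/[!inE] /eqP -> //|/mapP[i]].
  by rewrite mem_enum in_setC1 => im ->; rewrite g_vert // gx0 mul0r.
Qed.

(* Then for vertices a, j common to both supports the
   coefficient ratio t/l at a is at most that at j: otherwise p, q and the
   vertices other than e_a, e_b would be n+1 points in conical position. *)
Lemma coef_ratio_le (p q : V) (Sp Sq : {set 'I_n.+1}) (l t : 'I_n.+1 -> R)
    (a b j m : 'I_n.+1) :
  p \in X -> q \in X -> pos_repr e p Sp l -> pos_repr e q Sq t ->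
  a \in Sp -> a \in Sq -> j \in Sp -> j \in Sq ->
  b \notin Sp -> b \notin Sq -> m \in Sq -> m \notin Sp ->
  t a * l j <= t j * l a.
Proof.
move=> pX qX pl qt aSp aSq jSp jSq bSp bSq mSq mSp.
have [->|ja] := eqVneq j a; first by rewrite mulrC.
rewrite leNgt; apply/negP => ratio_lt.
have l_a := pl.1 a aSp; have t_a := qt.1 a aSq; have t_m := qt.1 m mSq.
have ab : a != b by apply: contraNneq bSq => <-.
have qp : q != p := pos_repr_neq he_aff he_sum pl qt bSp bSq mSq mSp.
set P := ~: [set a; b].
have inP i : (i \in P) = (i != a) && (i != b).
  by rewrite inE in_set2 negb_or.
have p_vert i : i != a -> p != e i := pos_repr_neq_vertex he_aff he_sum pl aSp bSp.
have q_vert i : i != a -> q != e i := pos_repr_neq_vertex he_aff he_sum qt aSq bSq.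
pose c v := if v == p then coef_on Sp l else coef_on Sq t.
apply: (good_position_dependency (xs := [:: p; q]) (c := c) (P := P)).
- by move=> v /[!inE] /orP[] /eqP ->.
- by rewrite /= inE eq_sym qp.
- move=> v i vpq; rewrite inP => /andP[ia _].
  by move: vpq; rewrite !inE => /orP[] /eqP ->; [exact: p_vert | exact: q_vert].
- by have := cardsC [set a; b]; rewrite cards2 ab => ->; rewrite card_ord.
- move=> v /[!inE] /orP[] /eqP ->; rewrite /c ?eqxx ?(negbTE qp).
    exact: pos_repr_coords pl.
  exact: pos_repr_coords qt.
move=> g g_coord.
have coord0 i :
    g p * coef_on Sp l i + g q * coef_on Sq t i + (if i \in P then g (e i) else 0) = 0.
  have := g_coord i b.
  rewrite /dependency_coord !big_cons !big_nil /c ?eqxx ?(negbTE qp) !addr0.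
  rewrite (inP b) eqxx andbF (coef_on_out l bSp) (coef_on_out t bSq).
  by rewrite !mulr0 !addr0.
have g_a : g p * l a + g q * t a = 0.
  have := coord0 a; rewrite (inP a) eqxx /= addr0.
  by rewrite (coef_on_in l aSp) (coef_on_in t aSq).
have g_vert i : i \in P -> g (e i) = - (g p * coef_on Sp l i + g q * coef_on Sq t i).
  by move=> iP; have := coord0 i; rewrite iP => /eqP; rewrite addrC addr_eq0 => /eqP.
have inA i : i \in P -> e i \in [:: p; q] ++ map e (enum P).
  by move=> iP; rewrite mem_cat map_f ?orbT // mem_enum.
have jP : j \in P by rewrite inP ja; apply: contraNneq bSq => <-.
have mP : m \in P.
  rewrite inP; apply/andP.
  by split; [apply: contraNneq mSp => ->|apply: contraNneq bSq => <-].
case: (two_point_signs l_a t_a ratio_lt g_a)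
  => [[gp0 gq0]|[gq_lt0 gj]|[gp_lt0 gq_gt0]].
- left => v; rewrite mem_cat => /orP[/[!inE] /orP[] /eqP -> //|/mapP[i]].
  by rewrite mem_enum => iP ->; rewrite g_vert // gp0 gq0 !mul0r addr0 oppr0.
- right; exists q, (e j); split; rewrite ?inA ?q_vert //.
    by rewrite mem_cat !inE eqxx orbT.
  by rewrite (g_vert j jP) (coef_on_in l jSp) (coef_on_in t jSq) oppr_lt0.
- right; exists p, (e m); split; rewrite ?inA //.
  + by rewrite mem_cat !inE eqxx.
  + by apply: p_vert; apply: contraNneq mSp => ->.
  + rewrite (g_vert m mP) (coef_on_out l mSp) (coef_on_in t mSq).
    by rewrite mulr0 add0r oppr_lt0 mulr_gt0.
Qed.

Lemma coef_ratio_eq (p q : V) (Sp Sq : {set 'I_n.+1}) (l t : 'I_n.+1 -> R)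
    (a b j m : 'I_n.+1) :
  p \in X -> q \in X -> pos_repr e p Sp l -> pos_repr e q Sq t ->
  a \in Sp -> a \in Sq -> j \in Sp -> j \in Sq ->
  b \notin Sp -> b \notin Sq -> m \in Sq -> m \notin Sp ->
  t a * l j = t j * l a.
Proof.
move=> pX qX pl qt aSp aSq jSp jSq bSp bSq mSq mSp.
by apply/le_anti; rewrite !(coef_ratio_le pX qX pl qt _ _ _ _ bSp bSq mSq mSp).
Qed.

End GoodPosition.

Theorem proposition6p5 (R : realType) (n : nat)
  (e : 'I_n.+1 -> 'rV[R]_n) (X : seq 'rV[R]_n)
  (* E is the vertex set of an n-simplex with e_0 + ... + e_n = 0 *)
  (he_aff : affinely_independent e)
  (he_sum : \sum_i e i = 0)
  (* X is a finite subset of R^n \ {0} containing E *)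
  (hX0 : forall x, x \in X -> x != 0)
  (hEX : forall i, e i \in X)
  (* no element of X is a positive multiple of another *)
  (hXmult : forall x y, x \in X -> y \in X -> forall t : R, 0 < t -> x = t *: y -> x = y)
  (* every n+1 points of X are in good position *)
  (hgood : forall A : seq 'rV[R]_n, uniq A -> size A = n.+1 ->
             {subset A <= X} -> good_position A)
  (* normalization convention: for every x in X, the coefficients of x in
     its support have minimum 1 *)
  (hnorm : forall x S c, x \in X -> is_support e x S -> pos_repr e x S c ->
             min_coef_one S c)
  (p q : 'rV[R]_n) (hp : p \in X) (hq : q \in X)
  (Sp Sq : {set 'I_n.+1})
  (hSp : is_support e p Sp) (hSq : is_support e q Sq)
  (hSpq : Sp \proper Sq) (hSp2 : (2 <= #|Sp|)%N)
  (lambda theta : 'I_n.+1 -> R)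
  (hlambda : pos_repr e p Sp lambda) (htheta : pos_repr e q Sq theta) :
  forall i, i \in Sp -> lambda i = theta i.
Proof.
move=> i iSp.
have /properP [subpq [m mSq mSp]] := hSpq.
have inSq j : j \in Sp -> j \in Sq := subsetP subpq j.
have [b bSq] := support_misses_vertex he_sum hSq htheta (hnorm _ _ _ hq hSq htheta).
have bSp : b \notin Sp := contra (inSq b) bSq.
have ratio a j : a \in Sp -> j \in Sp -> theta a * lambda j = theta j * lambda a.
  move=> aSp jSp; apply: (coef_ratio_eq he_aff he_sum hEX hgood hp hq hlambda htheta
    aSp (inSq a aSp) jSp (inSq j jSp) bSp bSq mSq mSp).
have [[k kSp lk] l_ge1] := hnorm _ _ _ hp hSp hlambda.
have [[m0 m0Sq tm0] t_ge1] := hnorm _ _ _ hq hSq htheta.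
(* theta k = 1: otherwise theta k and theta j (j another index of Sp) both
   exceed the minimum theta m0 = 1 *)
have tk1 : theta k = 1.
  apply/eqP; rewrite eq_le t_ge1 ?inSq // andbT leNgt; apply/negP => tk_gt1.
  have [j] : exists j, j \in Sp :\ k.
    by apply/set0Pn; rewrite -card_gt0; move: hSp2; rewrite (cardsD1 k) kSp.
  rewrite in_setD1 => /andP[jk jSp].
  have tj : theta j = theta k * lambda j by rewrite (ratio k j) // lk mulr1.
  have l_j := l_ge1 j jSp.
  have tm_lt_tk : theta m0 < theta k by rewrite tm0.
  have tm_lt_tj : theta m0 < theta j by rewrite tm0 tj; nra.
  have := coef_above_unique he_aff he_sum hEX hgood hq htheta bSq m0Sq
    (inSq j jSp) (inSq k kSp) tm_lt_tj tm_lt_tk.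
  by apply/eqP.
by have := ratio k i kSp iSp; rewrite lk tk1 mulr1 mul1r.
Qed.
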